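(* Let $X$ be a topological space and $T$ a locally compact Hausdorff space such that the mapping space $C(T,X)$ (with the compact-open topology) has the fixed point property. Then $X$ has the fixed point property with respect to $T$.
   Context: A space has the fixed point property if every continuous self-map of it has a fixed point. The compact-open topology on $C(T,X)$ is generated by the sets $\{g\colon T\to X\mid g(K)\subseteq U\}$ for $K\subseteq T$ compact and $U\subseteq X$ open. The space $X$ has the fixed point property with respect to $T$ if for every continuous map $f\colon T\times X\to X$ there is a continuous map $p\colon T\to X$ with $f(t,p(t))=p(t)$ for all $t\in T$. *)

From mathcomp Require Import all_boot all_order.
From mathcomp Require Import all_classical all_reals all_analysis.
Set Implicit Arguments. Unset Strict Implicit. Unset Printing Implicit Defensive.
Local Open Scope classical_set_scope.

(* A continuous self-map of A is represented by a function F : Y -> Y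
   mapping A into A and continuous within A (values outside A are irrelevant). *)
Definition fpp_on (Y : topologicalType) (A : set Y) : Prop :=
  forall F : Y -> Y, F @` A `<=` A -> {within A, continuous F} ->
    exists2 y, A y & F y = y.

Definition mapping_space (T X : topologicalType) : set {compact-open, T -> X} :=
  [set g | continuous (g : T -> X)].

Definition fpp_wrt (T X : topologicalType) : Prop :=
  forall f : T * X -> X, continuous f ->
    exists p : T -> X, continuous p /\ forall t, f (t, p t) = p t.

(* For continuous f : T * X -> X, the map g |-> (t |-> f (t, g t)) sends C(T,X)
   into itself, and a fixed point of it is exactly a continuous p with
   f (t, p t) = p t.  It is continuous for the compact-open topology: it is the
   curried form of (g, t) |-> f (t, g t), which is continuous because
   evaluation C(T,X) * T -> X is, T being locally compact and regular. *)
From mathcomp Require Import all_boot all_order.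
From mathcomp Require Import all_classical all_reals all_analysis.
Local Open Scope classical_set_scope.

Lemma locally_compact_hausdorff_regular {T : topologicalType} :
  locally_compact [set: T] -> hausdorff_space T -> regular_space T.
Proof.
move=> lcT hT t; have [B] := @lcT t I; rewrite withinET => Bt [cptB _].
exact: compact_regular cptB Bt.
Qed.

Definition graph_comp {T X Y : Type} (f : T * X -> Y) (g : T -> X) : T -> Y :=
  fun t => f (t, g t).

Section graph_comp_continuous.
Import ArrowAsCompactOpen.
Context {T X Y : topologicalType}.

Lemma continuous_graph_comp (f : T * X -> Y) (g : T -> X) :
  continuous f -> continuous g -> continuous (graph_comp f g).
Proof.
move=> cf cg t; apply: continuous_comp (cf _).
exact: cvg_pair cvg_id (cg t).
Qed.

Lemma graph_comp_continuous (f : T * X -> Y) :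
  locally_compact [set: T] -> hausdorff_space T -> continuous f ->
  continuous (fun g : continuousType T X => graph_comp f g : T -> Y).
Proof.
move=> lcT hT cf.
pose h (gt : continuousType T X * T) : Y := f (gt.2, eval gt).
have -> : (fun g : continuousType T X => graph_comp f g) = curry h by [].
apply: continuous_curry_fun => gt; apply: continuous_comp (cf _).
apply: cvg_pair; first exact: cvg_snd.
exact: (eval_continuous lcT (locally_compact_hausdorff_regular lcT hT)).
Qed.

Lemma continuous_within_mapping_space {Z : topologicalType}
    (F : {compact-open, T -> X} -> Z) :
  continuous (fun g : continuousType T X => F (g : T -> X)) ->
  {within @mapping_space T X, continuous F}.
Proof.
move=> cF; apply/subspace_continuousP => g cg W /= FgW.
have := cF (mkcts cg : continuousType T X) W FgW.
rewrite nbhsE => -[_ [[V oV <-] Vg] VW].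
apply: filterS (open_nbhs_nbhs (conj oV Vg)) => h Vh ch.
exact: (VW (mkcts ch : continuousType T X)).
Qed.

End graph_comp_continuous.

Theorem corollary6p2 (X T : topologicalType) :
  locally_compact [set: T] -> hausdorff_space T ->
  @fpp_on {compact-open, T -> X} (@mapping_space T X) -> @fpp_wrt T X.
Proof.
move=> lcT hT fppC f cf.
have [p cp fp] : exists2 p, mapping_space p & graph_comp f p = p.
  apply: (fppC (graph_comp f)).
    by move=> _ [g cg <-]; exact: continuous_graph_comp.
  apply: continuous_within_mapping_space.
  exact: graph_comp_continuous.
by exists p; split => // t; rewrite -[in RHS]fp.
Qed.
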